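(* Let $G$ be a graph of order $n\geq 3$ with no full vertex (i.e., no vertex of degree $n-1$). Then $\mathcal{C}_f(G)\geq 2\,d_f(G)$.
   Context: All graphs are finite and simple; $G=(V,E)$, $N(v)$ is the open neighborhood of $v$. A dominating set is $D\subseteq V$ such that every vertex of $V\setminus D$ has a neighbor in $D$. For an integer $k\geq 1$, a $k$-fair dominating set ($kFD$-set) is a dominating set $D$ such that $|N(v)\cap D|=k$ for every $v\in V\setminus D$. A fair dominating set (FD-set) is a $kFD$-set for some integer $k\geq 1$. A fair domatic partition of $G$ is a partition of $V$ into fair dominating sets; the fair domatic number $d_f(G)$ is the maximum number of parts of a fair domatic partition. A fair coalition consists of two disjoint sets $A_1,A_2\subseteq V$, neither of which is a fair dominating set, such that $A_1\cup A_2$ is a fair dominating set. A fair coalition partition ($fc$-partition) of $G$ is a partition $\Upsilon=\{A_1,\dots,A_k\}$ of $V$ such that every $A_i$ is either a singleton fair dominating set of $G$, or is not a fair dominating set and forms a fair coalition with some other non-fair-dominating set $A_j\in\Upsilon$. The fair coalition number $\mathcal{C}_f(G)$ is the maximum number of parts of an $fc$-partition of $G$. *)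

From mathcomp Require Import all_boot.
Set Implicit Arguments. Unset Strict Implicit. Unset Printing Implicit Defensive.

Definition simple_graph (T : finType) (e : rel T) : Prop :=
  symmetric e /\ irreflexive e.

Section FairDom.
Variables (T : finType) (e : rel T).

Definition nbhd (v : T) : {set T} := [set u | e v u].

Definition dominating (D : {set T}) : bool :=
  [forall v, (v \notin D) ==> [exists u in D, e v u]].

Definition kFD (k : nat) (D : {set T}) : bool :=
  dominating D && [forall v, (v \notin D) ==> (#|nbhd v :&: D| == k)].

(* fair dominating set: a kFD-set for some k >= 1.  The witness k can be taken
   <= |V| without loss (if D = V any k works, otherwise k = |N(v) ∩ D| <= |V|),
   so the existential ranges over 1 <= k <= |V|, making FD decidable. *)
Definition FD (D : {set T}) : bool :=
  [exists k : 'I_#|T|.+1, (0 < k) && kFD k D].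

Definition fair_domatic_partition (P : {set {set T}}) : bool :=
  partition P [set: T] && [forall A in P, FD A].

Definition fair_domatic_number : nat :=
  \max_(P : {set {set T}} | fair_domatic_partition P) #|P|.

Definition fair_coalition (A1 A2 : {set T}) : bool :=
  [&& [disjoint A1 & A2], ~~ FD A1, ~~ FD A2 & FD (A1 :|: A2)].

Definition fc_partition (P : {set {set T}}) : bool :=
  partition P [set: T] &&
  [forall A in P,
     ((#|A| == 1) && FD A) ||
     (~~ FD A && [exists B in P, (B != A) && fair_coalition A B])].

Definition fair_coalition_number : nat :=
  \max_(P : {set {set T}} | fc_partition P) #|P|.

End FairDom.

(* No singleton is fair dominating, since its vertex would be full.  In a part
   D of a fair domatic partition pick A, a largest proper subset of D that is
   not fair dominating; it is nonempty, and A :|: [set y] is fair dominating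
   for every y in D :\: A.  Splitting D into A and the singletons of D :\: A
   gives at least two parts, each forming a fair coalition with A or with a
   singleton.  Refining every part this way yields a fair coalition partition
   with at least 2 |P| parts. *)

From mathcomp Require Import all_boot.
Set Implicit Arguments. Unset Strict Implicit.

Section Refinement.
Variables (T : finType) (V : {set T}) (P : {set {set T}}).
Variable R : {set T} -> {set {set T}}.
Hypotheses (partP : partition P V) (partR : forall D, D \in P -> partition (R D) D).

Lemma refinement_disjoint :
  {in P &, forall D1 D2, D1 != D2 -> [disjoint R D1 & R D2]}.
Proof.
move=> D1 D2 PD1 PD2 neqD; apply/pred0P => B /=; apply/negbTE/andP => -[RB1 RB2].
have /set0Pn[x Bx] := partition_neq0 (partR PD1) RB1.
have x1 := subsetP (partitionS (partR PD1) RB1) x Bx.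
have x2 := subsetP (partitionS (partR PD2) RB2) x Bx.
have := trivIsetP (partition_trivIset partP) _ _ PD1 PD2 neqD.
by move/pred0P/(_ x); rewrite /= x1 x2.
Qed.

Lemma partition_refinement : partition (\bigcup_(D in P) R D) V.
Proof.
apply/and3P; split.
- rewrite -(cover_partition partP); apply/eqP/setP => x.
  apply/bigcupP/bigcupP => [[B /bigcupP[D PD RB] Bx] | [D PD Dx]].
    by exists D => //; apply: subsetP (partitionS (partR PD) RB) x Bx.
  rewrite -(cover_partition (partR PD)) in Dx; have /bigcupP[B RB Bx] := Dx.
  by exists B => //; apply/bigcupP; exists D.
- apply/trivIsetP => B1 B2 /bigcupP[D1 PD1 RB1] /bigcupP[D2 PD2 RB2] neqB.
  have [eqD|neqD] := eqVneq D1 D2.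
    rewrite eqD in RB1.
    exact: trivIsetP (partition_trivIset (partR PD2)) _ _ RB1 RB2 neqB.
  exact: disjointW (partitionS (partR PD1) RB1) (partitionS (partR PD2) RB2)
                   (trivIsetP (partition_trivIset partP) _ _ PD1 PD2 neqD).
- by apply/bigcupP => -[D PD]; rewrite (partition0 (partR PD)).
Qed.

Lemma card_refinement : #|\bigcup_(D in P) R D| = \sum_(D in P) #|R D|.
Proof.
pose F D := if D \in P then R D else set0.
have -> : \bigcup_(D in P) R D = \bigcup_D F D.
  by rewrite big_mkcond; apply: eq_bigr => D _; rewrite /F; case: ifP.
rewrite -sum1_card partition_disjoint_bigcup => [|D1 D2 neqD]; last first.
  rewrite /F -setI_eq0; case: ifP => PD1; last by rewrite set0I.
  by case: ifP => PD2; rewrite ?setI0 // setI_eq0 refinement_disjoint.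
rewrite [RHS]big_mkcond; apply: eq_bigr => D _; rewrite /F sum1_card.
by case: ifP => _; rewrite ?cards0.
Qed.

End Refinement.

Lemma partition_set1 (T : finType) (X : {set T}) :
  partition [set [set y] | y in X] X.
Proof.
have notP0 : set0 \notin [set [set y] | y in X].
  by apply/imsetP => -[y _ /(congr1 (fun S : {set T} => y \in S))]; rewrite !inE eqxx.
have [tiX _] : trivIset [set [set y] | y in X] /\ {in X &, injective set1}.
  by apply: trivIimset => // y z _ _ neq; rewrite disjoints1 in_set1 eq_sym.
rewrite /partition tiX notP0 cover_imset !andbT; apply/eqP/setP => x.
by apply/bigcupP/idP => [[y Xy /set1P ->] | Xx] //; exists x; rewrite ?in_set1.
Qed.

Lemma FD_neq0 (T : finType) (e : rel T) (D : {set T}) : FD e D -> D != set0.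
Proof.
case/existsP => k /andP[k_gt0 /andP[/forallP domD _]].
have /card_gt0P[v _] : 0 < #|T| by rewrite -ltnS (leq_trans _ (ltn_ord k)).
apply/set0Pn; have [Dv|nDv] := boolP (v \in D); first by exists v.
by have /existsP[u /andP[Du _]] := implyP (domD v) nDv; exists u.
Qed.

Section FairSplit.
Variables (T : finType) (e : rel T).
Hypotheses (sym_e : symmetric e) (irr_e : irreflexive e).
Hypothesis no_full_vertex : forall v : T, #|nbhd e v| != #|T| - 1.

Lemma FD_set1 (x : T) : ~~ FD e [set x].
Proof.
apply/negP => /existsP[k /andP[_ /andP[/forallP domx _]]].
suff Nx : nbhd e x = [set~ x] by move: (no_full_vertex x); rewrite Nx cardsC1 subn1 eqxx.
apply/setP => v; rewrite !inE; have [->|nvx] := eqVneq v x; first by rewrite irr_e.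
have nxv : v \notin [set x] by rewrite inE nvx.
have /existsP[u /andP[/set1P -> evx]] := implyP (domx v) nxv.
by rewrite sym_e.
Qed.

Definition max_nonFD (D : {set T}) : {set T} :=
  [arg max_(A > set0 | (A \proper D) && ~~ FD e A) #|A|].

Variable D : {set T}.
Hypothesis FD_D : FD e D.
Let A := max_nonFD D.

Lemma max_nonFDP :
  [/\ A \proper D, ~~ FD e A &
      forall B : {set T}, B \proper D -> ~~ FD e B -> #|B| <= #|A|].
Proof.
rewrite /A /max_nonFD; case: arg_maxnP => [|B /andP[pB nB] maxB].
  by rewrite proper0 (FD_neq0 FD_D); apply/negP => /FD_neq0; rewrite eqxx.
by split=> // C pC nC; apply: maxB; rewrite pC.
Qed.

Lemma max_nonFD_neq0 : A != set0.
Proof.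
have [pA _ maxA] := max_nonFDP; have /set0Pn[y Dy] := FD_neq0 FD_D.
have p1 : [set y] \proper D.
  by rewrite properEneq sub1set Dy andbT; apply: contraNneq (FD_set1 y) => ->.
by rewrite -card_gt0 (leq_trans _ (maxA _ p1 (FD_set1 y))) ?cards1.
Qed.

(* Either y |: A = D, or it is a proper subset of D larger than A. *)
Lemma FD_max_nonFD_setU1 y : y \in D :\: A -> FD e (y |: A).
Proof.
case/setDP => Dy nAy; have [pA _ maxA] := max_nonFDP.
have [->//|neqD] := eqVneq (y |: A) D.
apply: contraT => nF; have := maxA _ _ nF.
rewrite properEneq neqD subUset sub1set Dy (proper_sub pA) cardsU1 nAy.
by rewrite ltnn => /(_ isT).
Qed.

Definition fair_split : {set {set T}} := A |: [set [set y] | y in D :\: A].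

Lemma partition_fair_split : partition fair_split D.
Proof.
have [pA _ _] := max_nonFDP.
rewrite /fair_split -{2}(setID D A) (setIidPr (proper_sub pA)).
apply: partitionU1; [exact: partition_set1 | exact: max_nonFD_neq0 |].
by move: (subxx (D :\: A)); rewrite subsetD disjoint_sym => /andP[].
Qed.

Lemma card_fair_split : 2 <= #|fair_split|.
Proof.
have [pA _ _] := max_nonFDP; have [_ [y Dy nAy]] := properP pA.
rewrite /fair_split cardsU1 card_imset; last exact: set1_inj.
have -> : A \notin [set [set z] | z in D :\: A].
  by apply/imsetP => -[z /setDP[_ nAz] eqA]; rewrite eqA in_set1 eqxx in nAz.
by rewrite add1n ltnS card_gt0; apply/set0Pn; exists y; rewrite inE nAy.
Qed.

Lemma fair_split_coalition B :
  B \in fair_split ->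
  ~~ FD e B && [exists C in fair_split, (C != B) && fair_coalition e B C].
Proof.
have [pA nA _] := max_nonFDP; case/setU1P => [->|/imsetP[y DAy ->]].
  have [_ [y Dy nAy]] := properP pA.
  have DAy : y \in D :\: A by rewrite inE nAy.
  rewrite nA; apply/existsP; exists [set y].
  rewrite !inE imset_f //= orbT /fair_coalition disjoint_sym disjoints1 nAy nA.
  rewrite FD_set1 setUC FD_max_nonFD_setU1 //= andbT.
  by apply: contraNneq nAy => <-; rewrite in_set1.
have nAy : y \notin A by case/setDP: DAy.
rewrite FD_set1; apply/existsP; exists A; rewrite !inE eqxx /=.
rewrite /fair_coalition disjoints1 nAy nA FD_set1 FD_max_nonFD_setU1 //= andbT.
by apply: contraNneq nAy => ->; rewrite in_set1.
Qed.

End FairSplit.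

Lemma fc_partition_refinement (T : finType) (e : rel T) P :
  simple_graph e -> (forall v : T, #|nbhd e v| != #|T| - 1) ->
  fair_domatic_partition e P ->
  exists2 Q, fc_partition e Q & 2 * #|P| <= #|Q|.
Proof.
move=> [sym_e irr_e] no_full /andP[partP /forall_inP FD_P].
have partR D (PD : D \in P) := partition_fair_split sym_e irr_e no_full (FD_P D PD).
exists (\bigcup_(D in P) fair_split e D); last first.
  rewrite (card_refinement partP partR) mulnC -sum_nat_const.
  by apply: leq_sum => D PD; exact: card_fair_split (FD_P D PD).
rewrite /fc_partition (partition_refinement partP partR).
apply/forall_inP => B /bigcupP[D PD RB]; apply/orP; right.
have /andP[-> /exists_inP[C RC coal]] :=
  fair_split_coalition sym_e irr_e no_full (FD_P D PD) RB.
by apply/exists_inP; exists C => //; apply/bigcupP; exists D.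
Qed.

Theorem theorem2p4 (T : finType) (e : rel T) :
  simple_graph e ->
  3 <= #|T| ->
  (forall v : T, #|nbhd e v| != #|T| - 1) ->
  2 * fair_domatic_number e <= fair_coalition_number e.
Proof.
move=> simple_e _ no_full.
rewrite mulnC -leq_divRL //; apply/bigmax_leqP => P fdP.
have [Q fcQ lePQ] := fc_partition_refinement simple_e no_full fdP.
rewrite leq_divRL // mulnC (leq_trans lePQ) //.
exact: (@leq_bigmax_cond _ (fc_partition e) (fun Q => #|Q|) Q fcQ).
Qed.
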